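(* Let $\Gamma$ be a semigroup with identity $e$, $\rho:\Gamma\to\mathrm{End}(G)$ an endomorphism action with $\rho(e)=\mathrm{Id}$ on a solenoid $G$, and $A$ a $\rho$-basis of $\widehat G$. Then: (1) $\rho$ is expansive if and only if $B_A(\epsilon)=\{e\}$ for some $\epsilon>0$; (2) $\rho_e$ has a non-trivial bounded orbit in $L(G)$ (i.e. some $p\ne 0$ with $\{\rho_e(\gamma)p:\gamma\in\Gamma\}$ bounded) if and only if $B^*_A(C)\ne\{0\}$ for some $C>0$.
   Context: A solenoid is a compact connected finite-dimensional metrizable abelian group (dual $\widehat G$ torsion-free of finite rank). $L(G)$ is the real vector space of homomorphisms $\widehat G\to\mathbb R$; $\widehat\rho(\gamma)(\chi)=\chi\circ\rho(\gamma)$ and $\rho_e(\gamma)(p)(\chi)=p(\chi\circ\rho(\gamma))$. A $\rho$-basis is a set $A\subset\widehat G$ generating $\widehat G$ as an abelian group with $A=\bigcup_{\gamma}\widehat\rho(\gamma)(F)$ for some finite $F\subset\widehat G$. Let $\delta:\mathbb S^1\to\mathbb R$, $\delta(z)=\inf\{|t|:t\in\mathbb R,e^{2\pi it}=z\}$. For $A\subset\widehat G$ and $r>0$: $B_A(r)=\{g\in G:\sup_{\chi\in A}\delta(\chi(g))<r\}$ and $B^*_A(r)=\{p\in L(G):\sup_{\chi\in A}|p(\chi)|<r\}$. The action is expansive if there is a neighborhood $U$ of the identity with $\bigcap_{\gamma}\rho(\gamma)^{-1}(U)=\{e\}$. *)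

From mathcomp Require Import all_boot all_order all_algebra.
From mathcomp Require Import all_classical all_reals all_analysis.
Set Implicit Arguments. Unset Strict Implicit. Unset Printing Implicit Defensive.
Import Order.TTheory GRing.Theory Num.Theory.
Local Open Scope classical_set_scope.
Local Open Scope ring_scope.

(* The solenoid G is represented through Pontryagin duality as the group of
   homomorphisms from its (discrete) dual D = \hat G into the circle
   T = R/Z, with the topology of pointwise convergence.  The circle is
   represented by the half-open interval [0,1) with addition mod 1; the point
   t of [0,1) stands for e^{2 pi i t}. *)

Section Defs.
Variable R : realType.

Definition frac (x : R) : R := x - (Num.floor x)%:~R.

Definition delta (t : R) : R :=
  inf [set `|s| | s in [set s : R | (s - t) \is a Num.int]].

Variable D : zmodType.

Definition torsion_free : Prop :=
  forall (n : nat) (x : D), (0 < n)%N -> x *+ n = 0 -> x = 0.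

Inductive gen_subgroup (A : set D) : D -> Prop :=
  | gen_base x : A x -> gen_subgroup A x
  | gen_zero : gen_subgroup A 0
  | gen_sub x y : gen_subgroup A x -> gen_subgroup A y -> gen_subgroup A (x - y).

(* D has finite rank: some finite family is maximal Z-independent, i.e.
   every element has a nonzero multiple in the subgroup it generates *)
Definition finite_rank : Prop :=
  exists s : seq D, forall x : D,
    exists2 n : nat, (0 < n)%N & gen_subgroup [set y | y \in s] (x *+ n).

Definition solG : set (D -> R) :=
  [set g | (forall x, 0 <= g x < 1) /\ (forall a b, g (a + b) = frac (g a + g b))].

Definition solG_e : D -> R := fun _ => 0.

Definition LG : set (D -> R) :=
  [set p | forall a b, p (a + b) = p a + p b].

(* the dual endomorphisms rhohat gamma : D -> D determine
   rho(gamma)(g) = g o rhohat(gamma)  and  rho_e(gamma)(p) = p o rhohat(gamma) *)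
Definition rho_act (Gam : Type) (rhohat : Gam -> D -> D) (gam : Gam) (g : D -> R)
  : D -> R := fun x => g (rhohat gam x).

(* neighbourhood of the identity in G (product/pointwise topology) *)
Definition nbhd_e (U : set (D -> R)) : Prop :=
  U `<=` solG /\
  exists (F : seq D) (r : R), 0 < r /\
    forall g, solG g -> (forall x, x \in F -> delta (g x) < r) -> U g.

Definition expansive (Gam : Type) (rhohat : Gam -> D -> D) : Prop :=
  exists U, nbhd_e U /\
    [set g | solG g /\ forall gam, U (rho_act rhohat gam g)] = [set solG_e].

Definition rho_basis (Gam : Type) (rhohat : Gam -> D -> D) (A : set D) : Prop :=
  (forall x, gen_subgroup A x) /\
  exists F : seq D, forall x, A x <-> exists gam, exists2 f, f \in F & x = rhohat gam f.

Local Open Scope ereal_scope.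
Definition B_A (A : set D) (r : R) : set (D -> R) :=
  [set g | solG g /\ ereal_sup [set (delta (g x))%:E | x in A] < r%:E].

Definition Bstar_A (A : set D) (r : R) : set (D -> R) :=
  [set p | LG p /\ ereal_sup [set (`|p x|)%R%:E | x in A] < r%:E].
Local Close Scope ereal_scope.

Definition bounded_orbit (Gam : Type) (rhohat : Gam -> D -> D) (p : D -> R) : Prop :=
  forall x : D, exists M : R, forall gam, `|rho_act rhohat gam p x| <= M.

End Defs.

From Pilot Require Import Defs.
From mathcomp Require Import all_boot all_order all_algebra.
From mathcomp Require Import all_classical all_reals all_analysis.
From mathcomp Require Import lra.
Set Implicit Arguments. Unset Strict Implicit. Unset Printing Implicit Defensive.
Import Order.TTheory GRing.Theory Num.Theory.
Local Open Scope classical_set_scope.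
Local Open Scope ring_scope.

(* A group seminorm on the dual that is bounded by c on the generating set A
   is bounded by N_z * c at each z, where N_z is the length of a word in A
   representing z.  Since A is invariant under the dual action, a bound on A
   for g (resp. p) is a bound on A for every rho(gam) g (resp. rho_e(gam) p).
   Applying this to the seminorms delta o g and |p| on the finitely many
   coordinates defining a neighbourhood of e (resp. on a single x) turns
   sup-bounds over A into bounds along the whole orbit; conversely, since
   A = U_gam rhohat(gam)(F), bounds on the orbit at the finite set F are
   bounds over A. *)

Section Delta.
Variable R : realType.

Lemma delta_le_norm (t s : R) : s - t \is a Num.int -> delta t <= `|s|.
Proof.
move=> hs; apply: ge_inf; last by exists s.
by exists 0 => y [s' _ <-].
Qed.

Lemma delta_ge0 (t : R) : 0 <= delta t.
Proof.
apply: lb_le_inf; first by exists `|t|, t => //=; rewrite subrr.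
by move=> y [s _ <-].
Qed.

Lemma delta0 : delta (0 : R) = 0.
Proof.
apply/le_anti; rewrite delta_ge0 andbT.
by have := @delta_le_norm 0 0; rewrite normr0 subrr; apply.
Qed.

Lemma delta_shift_int (t t' : R) : t - t' \is a Num.int -> delta t <= delta t'.
Proof.
move=> h; apply: lb_le_inf; first by exists `|t'|, t' => //=; rewrite subrr.
move=> y [s /= hs <-]; apply: delta_le_norm.
have -> : s - t = (s - t') - (t - t') by rewrite opprB addrA subrK.
by rewrite rpredB.
Qed.

Lemma deltaN (t : R) : delta (- t) <= delta t.
Proof.
apply: lb_le_inf; first by exists `|t|, t => //=; rewrite subrr.
move=> y [s /= hs <-]; rewrite -normrN; apply: delta_le_norm.
by rewrite -opprD rpredN.
Qed.

Lemma deltaD (t1 t2 : R) : delta (t1 + t2) <= delta t1 + delta t2.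
Proof.
have le_sub2 s1 : s1 - t1 \is a Num.int -> delta (t1 + t2) - `|s1| <= delta t2.
  move=> h1; apply: lb_le_inf; first by exists `|t2|, t2 => //=; rewrite subrr.
  move=> y [s2 /= h2 <-].
  have : delta (t1 + t2) <= `|s1 + s2|.
    apply: delta_le_norm.
    by rewrite opprD addrACA rpredD.
  have := ler_normD s1 s2; lra.
have : delta (t1 + t2) - delta t2 <= delta t1.
  apply: lb_le_inf; first by exists `|t1|, t1 => //=; rewrite subrr.
  move=> y [s1 /= h1 <-]; have := le_sub2 s1 h1; lra.
lra.
Qed.

Lemma frac_sub_int (x : R) : Defs.frac x - x \is a Num.int.
Proof. by rewrite /Defs.frac addrAC subrr add0r rpredN intr_int. Qed.

End Delta.

Section Additive.
Variables U V : zmodType.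
Variable f : U -> V.
Hypothesis fD : forall x y, f (x + y) = f x + f y.

Lemma additiveB x y : f (x - y) = f x - f y.
Proof. by rewrite -[in f x](subrK y x) fD addrK. Qed.

Lemma additive0 : f 0 = 0.
Proof. by rewrite -(subrr 0) additiveB subrr. Qed.

End Additive.

Section GroupSeminorm.
Variables (R : realType) (D : zmodType).

Definition group_seminorm (phi : D -> R) : Prop :=
  phi 0 <= 0 /\ forall x y, phi (x - y) <= phi x + phi y.

Lemma gen_subgroup_seminorm_bound (A : set D) z : gen_subgroup A z ->
  exists N : nat, forall (phi : D -> R) (c : R), 0 <= c -> group_seminorm phi ->
    (forall a, A a -> phi a <= c) -> phi z <= N%:R * c.
Proof.
elim => [x Ax | | x y _ [N1 H1] _ [N2 H2]].
- by exists 1%N => phi c _ _ H; rewrite mul1r; apply: H.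
- by exists 0%N => phi c _ [phi0 _] _; rewrite mul0r.
- exists (N1 + N2)%N => phi c c0 phiS phiA.
  have := H1 phi c c0 phiS phiA; have := H2 phi c c0 phiS phiA.
  have := phiS.2 x y; rewrite natrD mulrDl; lra.
Qed.

Lemma gen_subgroup_seminorm_bound_seq (A : set D) (F : seq D) :
  {in F, forall z, gen_subgroup A z} ->
  exists N : nat, forall (phi : D -> R) (c : R), 0 <= c -> group_seminorm phi ->
    (forall a, A a -> phi a <= c) -> {in F, forall z, phi z <= N%:R * c}.
Proof.
elim: F => [_|z F IH genF]; first by exists 0%N.
have [|NF HF] := IH; first by move=> w wF; apply: genF; rewrite inE wF orbT.
have [Nz Hz] := gen_subgroup_seminorm_bound (genF z (mem_head z F)).
exists (Nz + NF)%N => phi c c0 phiS phiA w; rewrite inE natrD mulrDl.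
have NFc : 0 <= NF%:R * c by rewrite mulr_ge0.
have Nzc : 0 <= Nz%:R * c by rewrite mulr_ge0.
case/orP => [/eqP -> | wF].
- by have := Hz phi c c0 phiS phiA; lra.
- by have := HF phi c c0 phiS phiA w wF; lra.
Qed.

Definition additive_mod_int (h : D -> R) : Prop :=
  forall a b, h (a + b) - (h a + h b) \is a Num.int.

Lemma delta_additive_mod_int_seminorm h :
  additive_mod_int h -> group_seminorm (fun z => delta (h z)).
Proof.
move=> hadd; split.
  rewrite -(@delta0 R); apply: delta_shift_int.
  by rewrite subr0 -rpredN; have := hadd 0 0; rewrite addr0 opprD addrA subrr sub0r.
move=> x y.
have hsub : h (x - y) - (h x + - h y) \is a Num.int.
  have := hadd (x - y) y; rewrite subrK -rpredN.
  suff -> : h (x - y) - (h x + - h y) = - (h x - (h (x - y) + h y)) by [].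
  lra.
have := delta_shift_int hsub; have := deltaD (h x) (- h y); have := deltaN (h y).
lra.
Qed.

Lemma solG_additive_mod_int g : solG g -> additive_mod_int g.
Proof. by move=> [_ gD] a b; rewrite gD frac_sub_int. Qed.

Lemma norm_additive_seminorm (p : D -> R) :
  (forall x y, p (x + y) = p x + p y) -> group_seminorm (fun z => `|p z|).
Proof.
move=> pD; split; first by rewrite additive0 // normr0.
by move=> x y; rewrite additiveB // ler_normB.
Qed.

End GroupSeminorm.

Section SupImage.
Variables (R : realType) (T : Type) (S : set T) (f : T -> R).
Local Open Scope ereal_scope.

Lemma ereal_sup_image_lt r :
  ereal_sup [set (f x)%:E | x in S] < r%:E -> forall x, S x -> (f x < r)%R.
Proof.
move=> hsup x Sx; rewrite -lte_fin; apply: le_lt_trans hsup.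
by apply: ereal_sup_ubound; exists x.
Qed.

Lemma ereal_sup_image_le_lt (c r : R) : (forall x, S x -> f x <= c)%R -> (c < r)%R ->
  ereal_sup [set (f x)%:E | x in S] < r%:E.
Proof.
move=> fc cr; apply: le_lt_trans (_ : c%:E < r%:E); last by rewrite lte_fin.
by apply: ge_ereal_sup => _ [x Sx <-]; rewrite lee_fin fc.
Qed.

End SupImage.

Lemma set_neq1_witness (T : Type) (S : set T) (z : T) :
  S z -> S <> [set z] -> exists2 p, S p & p <> z.
Proof.
move=> Sz neq; apply: contrapT => hno; apply: neq; apply/seteqP; split => p //.
by move=> Sp; apply: contrapT => pz; apply: hno; exists p.
by move=> ->.
Qed.

Section Action.
Variables (R : realType) (D : zmodType) (Gam : Type) (mul : Gam -> Gam -> Gam).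
Variables (rhohat : Gam -> D -> D) (A : set D) (F0 : seq D).
Hypothesis rhohatD : forall gam x y, rhohat gam (x + y) = rhohat gam x + rhohat gam y.
Hypothesis rhohatM : forall g1 g2 x, rhohat (mul g1 g2) x = rhohat g2 (rhohat g1 x).
Hypothesis A_gen : forall x, gen_subgroup A x.
Hypothesis A_orbit :
  forall x, A x <-> exists gam, exists2 f, f \in F0 & x = rhohat gam f.

Lemma rho_basis_invariant gam a : A a -> A (rhohat gam a).
Proof.
move=> /A_orbit [gam' [f Ff ->]]; apply/A_orbit.
by exists (mul gam' gam), f => //; rewrite rhohatM.
Qed.

Lemma rho_act_solG gam (g : D -> R) : solG g -> solG (rho_act rhohat gam g).
Proof. by move=> [g01 gD]; split => [x|a b]; rewrite /rho_act ?rhohatD. Qed.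

Lemma rho_act_LG gam (p : D -> R) : LG p -> LG (rho_act rhohat gam p).
Proof. by move=> pD a b; rewrite /rho_act rhohatD pD. Qed.

Lemma solG_e_solG : solG (@solG_e R D).
Proof. by split => [x|a b]; rewrite /solG_e ?lexx ?ltr01 // /Defs.frac addr0 floor0 subr0. Qed.

Lemma expansive_B_A_trivial :
  @expansive R D Gam rhohat -> exists2 eps : R, 0 < eps & B_A A eps = [set @solG_e R D].
Proof.
move=> [U [[Usol [F [r [r0 HU]]]] Ufix]].
have [N HN] := @gen_subgroup_seminorm_bound_seq R _ _ F (fun z _ => A_gen z).
have N1 : 0 < N.+1%:R :> R by rewrite ltr0n.
pose eps := r / N.+1%:R.
have eps0 : 0 < eps by rewrite divr_gt0.
have Neps_lt_r : N%:R * eps < r.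
  rewrite -[ltRHS](mulfVK (lt0r_neq0 N1)) -/eps mulrC ltr_pM2l // ltr_nat.
  exact: ltnSn.
exists eps => //; apply/seteqP; split => g; last first.
  move=> ->; split; first exact: solG_e_solG.
  by apply: ereal_sup_image_le_lt eps0 => x _; rewrite delta0.
move=> [sg hsup]; rewrite -Ufix; split => // gam.
have sgam := rho_act_solG gam sg.
apply: HU => // x xF; apply: le_lt_trans Neps_lt_r.
apply: (HN (fun z => delta (rho_act rhohat gam g z)) _ (ltW eps0)) xF.
  exact/delta_additive_mod_int_seminorm/solG_additive_mod_int.
move=> a Aa; apply/ltW/(ereal_sup_image_lt hsup).
exact: rho_basis_invariant.
Qed.

Lemma B_A_trivial_expansive (eps : R) :
  0 < eps -> B_A A eps = [set @solG_e R D] -> @expansive R D Gam rhohat.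
Proof.
move=> eps0 BAe.
have e2 : 0 < eps / 2 by rewrite divr_gt0.
exists [set g | solG g /\ forall x, x \in F0 -> delta (g x) < eps / 2].
split; first by split => [g []//|]; exists F0, (eps / 2).
apply/seteqP; split => g; last first.
  move=> ->; split; first exact: solG_e_solG.
  by move=> gam; split => [|x _]; [exact: solG_e_solG | rewrite /rho_act delta0].
move=> [sg hU]; rewrite -BAe; split => //.
apply: (ereal_sup_image_le_lt (c := eps / 2)); last by lra.
move=> x /A_orbit [gam [f Ff ->]].
by have [_ /(_ f Ff)/ltW] := hU gam.
Qed.

Lemma bounded_orbit_uniform (F : seq D) (p : D -> R) : bounded_orbit rhohat p ->
  exists M : R, 0 <= M /\ {in F, forall f gam, `|rho_act rhohat gam p f| <= M}.
Proof.
move=> pbd; elim: F => [|f F [MF [MF0 HF]]]; first by exists 0.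
have [Mf HMf] := pbd f.
exists (Num.max (Num.max Mf MF) 0); split; first by rewrite le_max lexx orbT.
move=> w; rewrite inE => /orP[/eqP -> | wF] gam; rewrite !le_max.
- by rewrite HMf.
- by rewrite HF ?orbT.
Qed.

Lemma bounded_orbit_Bstar_A_nontrivial (p : D -> R) :
  LG p -> p <> (fun _ => 0) -> bounded_orbit rhohat p ->
  exists2 C : R, 0 < C & Bstar_A A C <> [set (fun _ => 0)].
Proof.
move=> Lp pn0 pbd; have [M [M0 HM]] := bounded_orbit_uniform F0 pbd.
exists (M + 1); first lra.
have Bp : Bstar_A A (M + 1) p.
  split => //; apply: (ereal_sup_image_le_lt (c := M)); last by lra.
  by move=> x /A_orbit [gam [f Ff ->]]; apply: HM.
by move=> B0; apply: pn0; move: Bp; rewrite B0.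
Qed.

Lemma Bstar_A_nontrivial_bounded_orbit (C : R) :
  0 < C -> Bstar_A A C <> [set (fun _ => 0)] ->
  exists p : D -> R, LG p /\ p <> (fun _ => 0) /\ bounded_orbit rhohat p.
Proof.
move=> C0 Bne.
have B0 : Bstar_A A C (fun _ => 0).
  split; first by move=> a b; rewrite addr0.
  by apply: ereal_sup_image_le_lt C0 => x _; rewrite normr0.
have [p [Lp hsup] pn0] := set_neq1_witness B0 Bne.
exists p; split=> //; split=> // x.
have [N HN] := gen_subgroup_seminorm_bound R (A_gen x).
exists (N%:R * C) => gam; apply: (HN (fun z => `|rho_act rhohat gam p z|) _ (ltW C0)).
  exact/norm_additive_seminorm/rho_act_LG.
move=> a Aa; apply/ltW/(ereal_sup_image_lt hsup).
exact: rho_basis_invariant.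
Qed.

End Action.

Theorem proposition4p5 (R : realType) (D : zmodType)
  (Gam : Type) (mul : Gam -> Gam -> Gam) (e : Gam)
  (rhohat : Gam -> D -> D) (A : set D) :
  torsion_free D -> finite_rank D ->
  (forall a b c, mul a (mul b c) = mul (mul a b) c) ->
  (forall a, mul e a = a) -> (forall a, mul a e = a) ->
  (forall gam, forall x y, rhohat gam (x + y) = rhohat gam x + rhohat gam y) ->
  (forall x, rhohat e x = x) ->
  (forall g1 g2 x, rhohat (mul g1 g2) x = rhohat g2 (rhohat g1 x)) ->
  rho_basis rhohat A ->
  (@expansive R D Gam rhohat <->
     exists2 eps : R, 0 < eps & B_A A eps = [set @solG_e R D]) /\
  ((exists p, LG p /\ p <> (fun _ => 0) /\ @bounded_orbit R D Gam rhohat p) <->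
     exists2 C : R, 0 < C & Bstar_A A C <> [set (fun _ => 0)]).
Proof.
move=> _ _ _ _ _ rhohatD _ rhohatM [A_gen [F0 A_orbit]].
split; split.
- exact: expansive_B_A_trivial rhohatD rhohatM A_gen A_orbit.
- by move=> [eps]; apply: (B_A_trivial_expansive (R := R) A_orbit).
- by move=> [p [Lp [pn0]]]; apply: (bounded_orbit_Bstar_A_nontrivial A_orbit Lp pn0).
- by move=> [C]; apply: (Bstar_A_nontrivial_bounded_orbit (R := R) rhohatD rhohatM A_gen A_orbit).
Qed.
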